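(* Let $a,b,d<0$ and $c\ge c^+$, and let $\{W_n(z)\}_{n\ge0}$ be the normalised sequence defined below. Then $W_3(z)$ has exactly one negative zero. If moreover $W_3(z)$ has a positive real zero lying outside the interval $(x_g^-,x_g^+)$, then: $a>-1$; the quadratic $F(z)=A(z)^2+B(z)$ has a unique positive zero $x_0$; $W_3(z)$ has two zeros lying in the interval $\big(-b/(a+1),\,x_0\big)$; and \[ x_0<x_\Delta^+,\qquad c<\frac{b}{a+1}+\frac{a+1}{b}\,d,\qquad c^-<0 . \]
   Context: Let $a,b,c,d\in\mathbb{R}$ with $ac\ne0$, and put $A(z)=az+b$, $B(z)=cz+d$. The normalised sequence $\{W_n(z)\}_{n\ge0}$ is defined by $W_0(z)=1$, $W_1(z)=z$ and $W_n(z)=A(z)W_{n-1}(z)+B(z)W_{n-2}(z)$ for $n\ge2$. Notation: $\Delta_\Delta=-a^2d+abc+c^2$, $x_\Delta^+=\dfrac{-ab-2c+2\sqrt{\Delta_\Delta}}{a^2}$ (the larger zero of $A(z)^2+4B(z)$); $\Delta_g=(b+c)^2+4d(1-a)$, $x_g^\pm=\dfrac{b+c\pm\sqrt{\Delta_g}}{2(1-a)}$ (zeros of $g(z)=(1-a)z^2-(b+c)z-d$); $c^\pm=\pm2\sqrt{d(a-1)}-b$. *)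

From Stdlib Require Import Reals Lra.
Open Scope R_scope.

Definition Apol (a b z : R) : R := a * z + b.
Definition Bpol (c d z : R) : R := c * z + d.

(* Normalised sequence: W_0 = 1, W_1 = z, W_n = A W_{n-1} + B W_{n-2}. *)
Fixpoint Wpair (a b c d z : R) (n : nat) : R * R :=
  match n with
  | O => (1, z)
  | S k => let p := Wpair a b c d z k in
           (snd p, Apol a b z * snd p + Bpol c d z * fst p)
  end.
Definition W (a b c d : R) (n : nat) (z : R) : R := fst (Wpair a b c d z n).

Definition Fpol (a b c d z : R) : R := (Apol a b z) ^ 2 + Bpol c d z.

Definition Delta_Delta (a b c d : R) : R := - a ^ 2 * d + a * b * c + c ^ 2.
Definition x_Delta_plus (a b c d : R) : R :=
  (- a * b - 2 * c + 2 * sqrt (Delta_Delta a b c d)) / a ^ 2.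

Definition Delta_g (a b c d : R) : R := (b + c) ^ 2 + 4 * d * (1 - a).
Definition x_g_plus (a b c d : R) : R :=
  (b + c + sqrt (Delta_g a b c d)) / (2 * (1 - a)).
Definition x_g_minus (a b c d : R) : R :=
  (b + c - sqrt (Delta_g a b c d)) / (2 * (1 - a)).

Definition c_plus (a b d : R) : R := 2 * sqrt (d * (a - 1)) - b.
Definition c_minus (a b d : R) : R := - 2 * sqrt (d * (a - 1)) - b.

From Stdlib Require Import Reals Lra Psatz.
Open Scope R_scope.

(* Write h(z) = (a+1) z + b and g(z) = (1-a) z^2 - (b+c) z - d.  Then
   W_3 = z^3 - h g  and  F h = A^3 + W_3.
   Negative zeros: W_3 has one by the intermediate value theorem.  Two of them
   would force all three zeros to be negative; for a <= -1 this contradicts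
   the strict monotonicity of z^3/g(z) against the non-increasing line h on
   z < 0, and for a > -1 it contradicts Vieta, since the linear coefficient
   b(b+c) + d(a+1) of W_3 is negative.
   Positive zeros: at a positive zero y outside (x_g^-, x_g^+) we have
   g(y) >= 0, hence h(y) > 0 (so a > -1), hence F(y) < 0 because A(y)^3 < 0.
   Thus F(0) < 0 and F has a unique positive zero x0, with F < 0 exactly on
   [0, x0).  Every positive zero z of W_3 has F(z) h(z) = A(z)^3 < 0, which
   places it in (-b/(a+1), x0).  The remaining inequalities are read off
   F(-b/(a+1)) < 0 and F(x0) = 0. *)

Definition cubic (p q r s z : R) : R := p * z ^ 3 + q * z ^ 2 + r * z + s.
Definition quadratic (p q r z : R) : R := p * z ^ 2 + q * z + r.

Lemma cubic_neg_root p q r s :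
  0 < p -> 0 < s -> exists x, x < 0 /\ cubic p q r s x = 0.
Proof.
  intros hp hs.
  pose proof (Rabs_pos q) as hq; pose proof (Rabs_pos r) as hr.
  pose proof (Rle_abs q); pose proof (Rle_abs (- r)) as hr'; rewrite Rabs_Ropp in hr'.
  set (M := 1 + (Rabs q + Rabs r + s) / p).
  assert (hpM : p * M = p + Rabs q + Rabs r + s) by (unfold M; field; lra).
  assert (hM : 1 <= M) by (enough (0 < (Rabs q + Rabs r + s) / p) by (unfold M; lra);
                           apply Rdiv_lt_0_compat; lra).
  assert (hneg : cubic p q r s (- M) < 0).
  { assert (e : cubic p q r s (- M) = - M ^ 2 * (p * M) + q * M ^ 2 - r * M + s)
      by (unfold cubic; ring).
    rewrite e, hpM; simpl; nra. }
  destruct (IVT (cubic p q r s) (- M) 0) as [x [[_ hx0] hx]].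
  - unfold cubic; reg.
  - lra.
  - exact hneg.
  - unfold cubic; simpl; lra.
  - exists x; split; [|exact hx].
    destruct (Req_dec x 0) as [->|]; [|lra].
    unfold cubic in hx; simpl in hx; lra.
Qed.

Lemma cubic_third_root p q r s x1 x2 :
  p <> 0 -> x1 <> x2 -> cubic p q r s x1 = 0 -> cubic p q r s x2 = 0 ->
  exists x3, forall z, cubic p q r s z = p * (z - x1) * (z - x2) * (z - x3).
Proof.
  intros hp h12 h1 h2.
  set (E := p * (x1 ^ 2 + x1 * x2 + x2 ^ 2) + q * (x1 + x2) + r).
  assert (hE : E = 0).
  { apply (Rmult_eq_reg_l (x1 - x2)); [|lra].
    replace ((x1 - x2) * E) with (cubic p q r s x1 - cubic p q r s x2)
      by (unfold E, cubic; ring).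
    lra. }
  exists (- q / p - x1 - x2); intro z.
  assert (e : cubic p q r s z - p * (z - x1) * (z - x2) * (z - (- q / p - x1 - x2))
              = E * (z - x1) + cubic p q r s x1)
    by (unfold E, cubic; field; exact hp).
  rewrite hE, h1 in e; lra.
Qed.

Lemma cubic_vieta p q r s x1 x2 x3 :
  (forall z, cubic p q r s z = p * (z - x1) * (z - x2) * (z - x3)) ->
  r = p * (x1 * x2 + x1 * x3 + x2 * x3) /\ s = - p * (x1 * x2 * x3).
Proof.
  intros hf.
  pose proof (hf 0) as h0; pose proof (hf 1) as h1; pose proof (hf (-1)) as hm1.
  unfold cubic in h0, h1, hm1; simpl in h0, h1, hm1.
  split; nra.
Qed.

Lemma quadratic_nonneg_outside_roots p q r z :
  0 < p ->
  ~ ((- q - sqrt (q ^ 2 - 4 * p * r)) / (2 * p) < z <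
     (- q + sqrt (q ^ 2 - 4 * p * r)) / (2 * p)) ->
  0 <= quadratic p q r z.
Proof.
  intros hp hz.
  set (D := q ^ 2 - 4 * p * r) in *.
  assert (e : 4 * p * quadratic p q r z = (2 * p * z + q) ^ 2 - D)
    by (unfold D, quadratic; ring).
  destruct (Rlt_or_le D 0) as [hD|hD].
  { pose proof (pow2_ge_0 (2 * p * z + q)); nra. }
  set (sD := sqrt D) in *.
  assert (hsD : sD * sD = D) by (apply sqrt_sqrt; exact hD).
  pose proof (sqrt_pos D) as hsD0; fold sD in hsD0.
  assert (em : (- q - sD) / (2 * p) * (2 * p) = - q - sD) by (field; lra).
  assert (ep : (- q + sD) / (2 * p) * (2 * p) = - q + sD) by (field; lra).
  destruct (Rle_or_lt z ((- q - sD) / (2 * p))) as [hl|hl].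
  - assert (2 * p * z + q <= - sD) by nra. nra.
  - assert ((- q + sD) / (2 * p) <= z) by (apply Rnot_lt_le; intro; apply hz; lra).
    assert (sD <= 2 * p * z + q) by nra. nra.
Qed.

Lemma quadratic_pos_root p q r :
  0 < p -> r < 0 ->
  exists x0, 0 < x0 /\ forall z, 0 <= z ->
    (quadratic p q r z < 0 <-> z < x0) /\ (quadratic p q r z = 0 <-> z = x0).
Proof.
  intros hp hr.
  set (D := q ^ 2 - 4 * p * r).
  assert (hD : q ^ 2 < D) by (unfold D; nra).
  set (sD := sqrt D).
  assert (hsD : sD * sD = D) by (apply sqrt_sqrt; simpl in hD; nra).
  pose proof (sqrt_pos D) as hsD0; fold sD in hsD0.
  assert (hqs : q < sD) by (simpl in hD; nra).
  set (x0 := (- q + sD) / (2 * p)); set (x1 := (- q - sD) / (2 * p)).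
  assert (hfac : forall z, quadratic p q r z = p * (z - x0) * (z - x1)).
  { intro z.
    assert (e : p * (z - x0) * (z - x1) = p * z ^ 2 + q * z + (q ^ 2 - sD * sD) / (4 * p))
      by (unfold x0, x1; field; lra).
    rewrite e, hsD; unfold quadratic, D; field; lra. }
  assert (hx0 : 0 < x0) by (apply Rdiv_lt_0_compat; lra).
  assert (hx1 : x1 < 0).
  { assert (p * x0 * x1 < 0)
      by (replace (p * x0 * x1) with (quadratic p q r 0) by (rewrite hfac; ring);
          unfold quadratic; simpl; lra).
    assert (0 < p * x0) by nra.
    nra. }
  exists x0; split; [exact hx0|]; intros z hz; rewrite hfac.
  assert (hpz : 0 < p * (z - x1)) by nra.
  replace (p * (z - x0) * (z - x1)) with (p * (z - x1) * (z - x0)) by ring.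
  split; split; intro h.
  - nra.
  - nra.
  - destruct (Rmult_integral _ _ h); lra.
  - subst; ring.
Qed.

Definition hpol (a b z : R) : R := (a + 1) * z + b.
Definition gpol (a b c d z : R) : R := (1 - a) * z ^ 2 - (b + c) * z - d.

Section NormalisedSequence.

Variables a b c d : R.

Lemma W3_cubic z :
  W a b c d 3 z =
  cubic (a ^ 2) (2 * a * b + a * c + c) (a * d + b * b + b * c + d) (b * d) z.
Proof. unfold W, Wpair, Apol, Bpol, cubic; simpl; ring. Qed.

Lemma W3_hpol_gpol z : W a b c d 3 z = z ^ 3 - hpol a b z * gpol a b c d z.
Proof. rewrite W3_cubic; unfold cubic, hpol, gpol; ring. Qed.

Lemma Fpol_hpol z : Fpol a b c d z * hpol a b z = Apol a b z ^ 3 + W a b c d 3 z.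
Proof. rewrite W3_cubic; unfold Fpol, Apol, Bpol, hpol, cubic; ring. Qed.

Lemma Fpol_quadratic z :
  Fpol a b c d z = quadratic (a ^ 2) (2 * a * b + c) (b ^ 2 + d) z.
Proof. unfold Fpol, Apol, Bpol, quadratic; ring. Qed.

Hypotheses (ha : a < 0) (hb : b < 0) (hd : d < 0).

Lemma b_plus_c_pos : c >= c_plus a b d -> 0 < b + c.
Proof.
  unfold c_plus; intro hc.
  enough (0 < sqrt (d * (a - 1))) by lra.
  apply sqrt_lt_R0; nra.
Qed.

Lemma W3_neg_root : exists r, r < 0 /\ W a b c d 3 r = 0.
Proof.
  destruct (cubic_neg_root (a ^ 2) (2 * a * b + a * c + c) (a * d + b * b + b * c + d)
              (b * d)) as [r [hr0 hr]]; [simpl; nra | nra |].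
  exists r; rewrite W3_cubic; auto.
Qed.

Hypothesis hbc : 0 < b + c.

Lemma gpol_pos z : z < 0 -> 0 < gpol a b c d z.
Proof. intro hz; unfold gpol; simpl; nra. Qed.

(* z^3 / g(z) is strictly increasing on z < 0 *)
Lemma cube_gpol_lt r x :
  r < x < 0 -> r ^ 3 * gpol a b c d x < x ^ 3 * gpol a b c d r.
Proof.
  intros [hrx hx].
  set (K := (1 - a) * (r * x) ^ 2 - (b + c) * (r * x) * (x + r)
            - d * (x ^ 2 + x * r + r ^ 2)).
  assert (e : x ^ 3 * gpol a b c d r - r ^ 3 * gpol a b c d x = (x - r) * K)
    by (unfold K, gpol; ring).
  assert (hrx0 : 0 < r * x) by nra.
  assert (0 < K).
  { unfold K.
    assert (0 < (1 - a) * (r * x) ^ 2) by (simpl; nra).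
    assert (0 < (b + c) * (r * x)) by nra.
    assert (0 <= - (b + c) * (r * x) * (x + r)) by nra.
    assert (0 < x ^ 2 + x * r + r ^ 2) by (simpl; nra).
    nra. }
  nra.
Qed.

Lemma W3_neg_roots_ordered x1 x2 :
  a + 1 <= 0 -> x1 < x2 < 0 -> W a b c d 3 x1 = 0 -> W a b c d 3 x2 <> 0.
Proof.
  intros ha1 hx h1 h2.
  rewrite W3_hpol_gpol in h1, h2.
  pose proof (cube_gpol_lt x1 x2 hx) as hlt.
  pose proof (gpol_pos x1 ltac:(lra)); pose proof (gpol_pos x2 ltac:(lra)).
  replace (x1 ^ 3) with (hpol a b x1 * gpol a b c d x1) in hlt by lra.
  replace (x2 ^ 3) with (hpol a b x2 * gpol a b c d x2) in hlt by lra.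
  unfold hpol in hlt.
  assert (0 <= gpol a b c d x1 * gpol a b c d x2 * (- (a + 1)) * (x2 - x1)).
  { repeat apply Rmult_le_pos; lra. }
  nra.
Qed.

Lemma W3_linear_coef_neg : -1 < a -> a * d + b * b + b * c + d < 0.
Proof. intro ha1; nra. Qed.

Lemma W3_neg_root_unique x1 x2 :
  x1 < 0 -> x2 < 0 -> W a b c d 3 x1 = 0 -> W a b c d 3 x2 = 0 -> x1 = x2.
Proof.
  intros hx1 hx2 h1 h2.
  destruct (Req_dec x1 x2) as [|hne]; [assumption|exfalso].
  destruct (Rle_or_lt (a + 1) 0) as [ha1|ha1].
  - destruct (Rlt_or_le x1 x2).
    + exact (W3_neg_roots_ordered x1 x2 ha1 ltac:(lra) h1 h2).
    + exact (W3_neg_roots_ordered x2 x1 ha1 ltac:(lra) h2 h1).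
  - rewrite W3_cubic in h1, h2.
    destruct (cubic_third_root _ _ _ _ x1 x2 (pow_nonzero a 2 ltac:(lra)) hne h1 h2) as [x3 hf].
    destruct (cubic_vieta _ _ _ _ _ _ _ hf) as [hQ hS].
    pose proof (W3_linear_coef_neg ltac:(lra)).
    assert (ha2 : 0 < a ^ 2) by (simpl; nra).
    assert (0 < a ^ 2 * (x1 * x2)) by (apply Rmult_lt_0_compat; nra).
    assert (x3 < 0) by nra.
    assert (0 < x1 * x2 + x1 * x3 + x2 * x3) by nra.
    nra.
Qed.

Lemma gpol_nonneg_outside y :
  ~ (x_g_minus a b c d < y < x_g_plus a b c d) -> 0 <= gpol a b c d y.
Proof.
  intro hy.
  assert (e : gpol a b c d y = quadratic (1 - a) (- (b + c)) (- d) y)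
    by (unfold gpol, quadratic; ring).
  assert (eD : Delta_g a b c d = (- (b + c)) ^ 2 - 4 * (1 - a) * (- d))
    by (unfold Delta_g; ring).
  rewrite e; apply quadratic_nonneg_outside_roots; [lra|].
  unfold x_g_minus, x_g_plus in hy; rewrite Ropp_involutive, <- eD.
  exact hy.
Qed.

Lemma hpol_pos_of_W3_root y :
  0 < y -> W a b c d 3 y = 0 -> 0 <= gpol a b c d y -> 0 < hpol a b y.
Proof.
  intros hy hW hg.
  rewrite W3_hpol_gpol in hW.
  assert (0 < y ^ 3) by (apply pow_lt; exact hy).
  destruct (Rle_or_lt (hpol a b y) 0) as [hh|]; [|assumption].
  assert (0 <= - hpol a b y * gpol a b c d y) by (apply Rmult_le_pos; lra).
  nra.
Qed.

Lemma a_gt_m1_of_hpol_pos y : 0 < y -> 0 < hpol a b y -> -1 < a.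
Proof. unfold hpol; intros; nra. Qed.

Lemma hpol_pos_iff z : -1 < a -> (0 < hpol a b z <-> - b / (a + 1) < z).
Proof.
  intro ha1; unfold hpol.
  assert (e : - b / (a + 1) * (a + 1) = - b) by (field; lra).
  split; intro h.
  - apply (Rmult_lt_reg_r (a + 1)); lra.
  - apply (Rmult_lt_compat_r (a + 1)) in h; lra.
Qed.

Lemma Fpol_hpol_neg z : 0 < z -> W a b c d 3 z = 0 -> Fpol a b c d z * hpol a b z < 0.
Proof.
  intros hz hW.
  rewrite Fpol_hpol, hW, Rplus_0_r.
  assert (hA : Apol a b z < 0) by (unfold Apol; nra).
  assert (0 < Apol a b z * Apol a b z) by nra.
  simpl; nra.
Qed.

Lemma Fpol_const_neg y : 0 < y -> Fpol a b c d y < 0 -> b ^ 2 + d < 0.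
Proof.
  rewrite Fpol_quadratic; unfold quadratic; simpl; intros hy hF.
  assert (0 < (2 * a * b + c) * y) by (apply Rmult_lt_0_compat; nra).
  assert (0 <= a * a * (y * y)) by (apply Rmult_le_pos; nra).
  nra.
Qed.

Lemma Fpol_pos_root :
  b ^ 2 + d < 0 ->
  exists x0, 0 < x0 /\ forall z, 0 <= z ->
    (Fpol a b c d z < 0 <-> z < x0) /\ (Fpol a b c d z = 0 <-> z = x0).
Proof.
  intro hF0.
  destruct (quadratic_pos_root (a ^ 2) (2 * a * b + c) (b ^ 2 + d)) as [x0 [hx0 hs]];
    [simpl; nra | exact hF0 |].
  exists x0; split; [exact hx0|].
  intros z hz; rewrite Fpol_quadratic; exact (hs z hz).
Qed.

Lemma W3_third_root_pos r y :
  r < 0 -> 0 < y -> W a b c d 3 r = 0 -> W a b c d 3 y = 0 ->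
  exists t, 0 < t /\ forall z, W a b c d 3 z = a ^ 2 * (z - r) * (z - y) * (z - t).
Proof.
  intros hr hy h1 h2.
  rewrite W3_cubic in h1, h2.
  destruct (cubic_third_root _ _ _ _ r y (pow_nonzero a 2 ltac:(lra)) ltac:(lra) h1 h2) as [t hf].
  exists t; split.
  - destruct (cubic_vieta _ _ _ _ _ _ _ hf) as [_ hS].
    assert (ha2 : 0 < a ^ 2) by (simpl; nra).
    assert (r * y < 0) by nra.
    assert (a ^ 2 * (r * y) < 0) by nra.
    assert (0 < b * d) by nra.
    nra.
  - intro z; rewrite W3_cubic; apply hf.
Qed.

(* A positive zero z of W_3 has F(z) h(z) = A(z)^3 < 0.  If h(z) <= 0, then
   0 < z <= -b/(a+1) < x0 gives F(z) < 0 as well, which is impossible. *)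
Lemma W3_pos_root_between x0 z :
  -1 < a ->
  (forall z, 0 <= z -> (Fpol a b c d z < 0 <-> z < x0)) ->
  - b / (a + 1) < x0 -> 0 < z -> W a b c d 3 z = 0 ->
  - b / (a + 1) < z < x0.
Proof.
  intros ha1 hF hux0 hz hW.
  pose proof (Fpol_hpol_neg z hz hW) as hprod.
  destruct (Rlt_or_le 0 (hpol a b z)) as [hh|hh].
  - assert (hu : - b / (a + 1) < z) by (apply hpol_pos_iff; assumption).
    split; [exact hu|].
    apply hF; [lra|]; nra.
  - exfalso.
    assert (z <= - b / (a + 1)).
    { apply Rnot_lt_le; intro hu; apply (hpol_pos_iff z ha1) in hu; lra. }
    assert (Fpol a b c d z < 0) by (apply hF; lra).
    nra.
Qed.

(* B(x0) = F(x0) - A(x0)^2 < 0, and (a^2 x + a b + 2 c)^2 - 4 Delta_Delta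
   equals a^2 (F(x) + 3 B(x)). *)
Lemma Fpol_root_lt_x_Delta_plus x0 :
  0 < x0 -> Fpol a b c d x0 = 0 -> x0 < x_Delta_plus a b c d.
Proof.
  intros hx0 hF.
  assert (hB : Bpol c d x0 < 0).
  { unfold Fpol in hF; assert (Apol a b x0 < 0) by (unfold Apol; nra).
    simpl in hF; nra. }
  set (v := a ^ 2 * x0 + a * b + 2 * c).
  assert (hsq : v ^ 2 < 4 * Delta_Delta a b c d).
  { assert (e : v ^ 2 - 4 * Delta_Delta a b c d
                = a ^ 2 * (Fpol a b c d x0 + 3 * Bpol c d x0))
      by (unfold v, Delta_Delta, Fpol, Apol, Bpol; ring).
    assert (0 < a ^ 2) by (simpl; nra).
    assert (a ^ 2 * (0 + 3 * Bpol c d x0) < 0) by nra.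
    rewrite hF in e; lra. }
  assert (hDD : 0 < Delta_Delta a b c d) by (simpl in hsq; nra).
  set (sd := sqrt (Delta_Delta a b c d)).
  assert (hsd : sd * sd = Delta_Delta a b c d) by (apply sqrt_sqrt; lra).
  assert (hsd0 : 0 <= sd) by apply sqrt_pos.
  assert (v < 2 * sd) by (simpl in hsq; nra).
  unfold x_Delta_plus; fold sd.
  apply (Rmult_lt_reg_r (a ^ 2)); [simpl; nra|].
  replace ((- a * b - 2 * c + 2 * sd) / a ^ 2 * a ^ 2) with (- a * b - 2 * c + 2 * sd)
    by (field; lra).
  unfold v in *; lra.
Qed.

(* With u = -b/(a+1) one has A(u) = -u, so F(u) = u^2 + c u + d. *)
Lemma c_lt_of_Fpol_neg :
  -1 < a -> Fpol a b c d (- b / (a + 1)) < 0 -> c < b / (a + 1) + (a + 1) / b * d.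
Proof.
  intros ha1 hF.
  set (u := - b / (a + 1)) in *.
  assert (hu : 0 < u) by (apply Rdiv_lt_0_compat; lra).
  assert (eF : Fpol a b c d u = u ^ 2 + c * u + d)
    by (unfold Fpol, Apol, Bpol, u; field; lra).
  assert (e : u * (b / (a + 1) + (a + 1) / b * d) = - u ^ 2 - d)
    by (unfold u; field; lra).
  apply (Rmult_lt_reg_l u); [exact hu|].
  rewrite e; lra.
Qed.

Lemma c_minus_neg : b ^ 2 + d < 0 -> c_minus a b d < 0.
Proof.
  intro hF0; unfold c_minus.
  set (s := sqrt (d * (a - 1))).
  assert (hs : s * s = d * (a - 1)) by (apply sqrt_sqrt; nra).
  assert (0 <= s) by apply sqrt_pos.
  simpl in hF0; nra.
Qed.

End NormalisedSequence.

Theorem theorem4p3 (a b c d : R)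
  (ha : a < 0) (hb : b < 0) (hd : d < 0) (hc : c >= c_plus a b d) :
  (exists! x : R, x < 0 /\ W a b c d 3 x = 0) /\
  ((exists y : R, 0 < y /\ W a b c d 3 y = 0 /\
                  ~ (x_g_minus a b c d < y < x_g_plus a b c d)) ->
   a > -1 /\
   (exists x0 : R,
      (0 < x0 /\ Fpol a b c d x0 = 0 /\
       (forall y, 0 < y -> Fpol a b c d y = 0 -> y = x0)) /\
      (exists x1 x2 r : R,
         (forall z, W a b c d 3 z = a ^ 2 * (z - r) * (z - x1) * (z - x2)) /\
         - b / (a + 1) < x1 < x0 /\ - b / (a + 1) < x2 < x0) /\
      x0 < x_Delta_plus a b c d) /\
   c < b / (a + 1) + (a + 1) / b * d /\
   c_minus a b d < 0).
Proof.
  pose proof (b_plus_c_pos a b c d ha hd hc) as hbc.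
  destruct (W3_neg_root a b c d ha hb hd) as [r [hr0 hr]].
  split.
  { exists r; split; [tauto|].
    intros x [hx0 hx]; exact (W3_neg_root_unique a b c d ha hb hd hbc r x hr0 hx0 hr hx). }
  intros [y [hy0 [hy hyout]]].
  assert (hhy : 0 < hpol a b y)
    by (apply (hpol_pos_of_W3_root a b c d); auto; apply gpol_nonneg_outside; auto).
  pose proof (a_gt_m1_of_hpol_pos a b hb y hy0 hhy) as ha1.
  assert (hFy : Fpol a b c d y < 0) by (pose proof (Fpol_hpol_neg a b c d ha hb y hy0 hy); nra).
  pose proof (Fpol_const_neg a b c d ha hb hbc y hy0 hFy) as hF0.
  destruct (Fpol_pos_root a b c d ha hF0) as [x0 [hx0 hF]].
  assert (hneg : forall z, 0 <= z -> (Fpol a b c d z < 0 <-> z < x0))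
    by (intros z hz; apply hF, hz).
  assert (hux0 : - b / (a + 1) < x0).
  { apply (hpol_pos_iff a b y ha1) in hhy; apply hneg in hFy; lra. }
  assert (hFx0 : Fpol a b c d x0 = 0) by (apply hF; lra).
  destruct (W3_third_root_pos a b c d ha hb hd r y hr0 hy0 hr hy) as [t [ht0 hfac]].
  assert (ht : W a b c d 3 t = 0) by (rewrite hfac; ring).
  repeat split; try lra.
  - exists x0; repeat split; auto.
    + intros z hz hFz; apply hF; lra.
    + exists y, t, r; split; [intro z; rewrite hfac; ring|].
      split; apply (W3_pos_root_between a b c d ha hb x0); auto.
    + apply Fpol_root_lt_x_Delta_plus; auto.
  - assert (0 < - b / (a + 1)) by (apply Rdiv_lt_0_compat; lra).
    apply c_lt_of_Fpol_neg; auto; apply hneg; lra.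
  - apply c_minus_neg; assumption.
Qed.
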